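(* For every $\pi\in\mathfrak{S}_n$, as polynomials in $x$, \[\Omega^{(\ell)}(\pi;x)=\Omega^{(r)}(\pi\eta;x),\qquad \Omega'(\pi;x)=\overline{\Omega}'(\eta\pi;x),\] where $\eta\in\mathfrak{S}_n$ is the involution $\eta(i)=n+1-i$.
   Context: $\mathfrak{S}_n$ is the symmetric group on $[n]$, permutations are words $(\pi(1),\dots,\pi(n))$, products are compositions, so $\pi\eta=(\pi(n),\dots,\pi(1))$ and $(\eta\pi)(i)=n+1-\pi(i)$. Let $Z$ be a finite totally ordered set each of whose elements is ''plus-type'' or ''minus-type''. For $\pi\in\mathfrak{S}_n$ let $N(\pi;Z)$ be the number of sequences $(a_1,\dots,a_n)\in Z^n$ with $a_1\le\dots\le a_n$ such that for every $s\in[n-1]$: if $\pi(s)<\pi(s+1)$ then $a_s<a_{s+1}$ or ($a_s=a_{s+1}$ is plus-type); if $\pi(s)>\pi(s+1)$ then $a_s<a_{s+1}$ or ($a_s=a_{s+1}$ is minus-type). For a positive integer $k$: $\Omega'(\pi;k)=N(\pi;\{\bar1<1<\dots<\bar k<k\})$; $\overline{\Omega}'(\pi;k)=N(\pi;\{0<\bar1<1<\dots<\overline{k-1}<k-1<\bar k\})$; $\Omega^{(\ell)}(\pi;k)=N(\pi;\{0<\bar1<1<\dots<\bar k<k\})$; $\Omega^{(r)}(\pi;k)=N(\pi;\{\bar1<1<\dots<\bar k<k<\overline{k+1}\})$; here $0$ and unbarred $j$ are plus-type and barred $\bar j$ minus-type. Each is, as a function of $k$, the restriction of a unique polynomial with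 rational coefficients, denoted by the same symbol. *)

From mathcomp Require Import all_boot all_order all_algebra all_fingroup.
Set Implicit Arguments. Unset Strict Implicit. Unset Printing Implicit Defensive.

(* A finite totally ordered set Z of "plus-type"/"minus-type" elements is encoded
   as a seq bool listing the types of its elements in increasing order
   (true = plus-type, false = minus-type); its elements are the ordinals
   'I_(size Z) with their natural order. *)

(* N(pi; Z): number of weakly increasing a : [n] -> Z such that for consecutive
   positions s, s+1: a_s < a_{s+1}, or a_s = a_{s+1} is plus-type when
   pi(s) < pi(s+1) (ascent) and minus-type when pi(s) > pi(s+1) (descent). *)
Definition Ncount (n : nat) (Z : seq bool) (pi : 'S_n) : nat :=
  #|[set a : {ffun 'I_n -> 'I_(size Z)} |
      [forall i : 'I_n, forall j : 'I_n, (val j == (val i).+1) ==>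
        [&& (a i <= a j)%N &
            ((a i < a j)%N || ((a i == a j) && (nth false Z (a i) == (pi i < pi j)%N)))]]]|.

(* [:: bar1; 1; bar2; 2; ...; bark; k] *)
Definition pairs (k : nat) : seq bool := flatten (nseq k [:: false; true]).

(* Omega'(pi;k):  {bar1 < 1 < ... < bark < k} *)
Definition Omega' n (pi : 'S_n) (k : nat) : nat := Ncount (pairs k) pi.
(* bar Omega'(pi;k): {0 < bar1 < 1 < ... < bar(k-1) < k-1 < bark} *)
Definition Omegabar' n (pi : 'S_n) (k : nat) : nat :=
  Ncount (true :: pairs k.-1 ++ [:: false]) pi.
(* Omega^(l)(pi;k): {0 < bar1 < 1 < ... < bark < k} *)
Definition Omega_l n (pi : 'S_n) (k : nat) : nat := Ncount (true :: pairs k) pi.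
(* Omega^(r)(pi;k): {bar1 < 1 < ... < bark < k < bar(k+1)} *)
Definition Omega_r n (pi : 'S_n) (k : nat) : nat := Ncount (pairs k ++ [:: false]) pi.

(* eta(i) = n+1-i (0-indexed: i |-> n-1-i) *)
Definition eta (n : nat) : 'S_n := perm (@rev_ord_inj n).

(* Products are compositions: (pi eta)(i) = pi(eta(i)).  In mathcomp,
   (s * t)%g x = t (s x), so pi eta = (eta * pi)%g and eta pi = (pi * eta)%g. *)
Definition compl n (pi : 'S_n) : 'S_n := (eta n * pi)%g.
Definition compr n (pi : 'S_n) : 'S_n := (pi * eta n)%g.

(* "f and g are, as polynomials in x, equal": any rational polynomials
   restricting to f and g on positive integers coincide. *)
Definition poly_eq (f g : nat -> nat) : Prop :=
  forall p q : {poly rat},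
    (forall k, (0 < k)%N -> (p.[k%:R] = (f k)%:R)%R) ->
    (forall k, (0 < k)%N -> (q.[k%:R] = (g k)%:R)%R) -> p = q.

From mathcomp Require Import all_boot all_order all_algebra all_fingroup.
From mathcomp Require Import zify.
Import GRing.Theory Num.Theory.
Set Implicit Arguments. Unset Strict Implicit. Unset Printing Implicit Defensive.

(* Both identities come from symmetries of the counted sequences.  Reading a
   backwards and turning Z upside down (x |-> |Z|-1-x) keeps a weakly increasing
   and turns the ascents of pi into descents of pi eta; this is compensated by
   swapping all types of Z.  Replacing pi by eta pi exchanges ascents and
   descents at the same positions, compensated in the same way without the
   reversal.  The alphabet {0 < bar1 < 1 < ... < bark < k} reversed and swapped
   is {bar1 < 1 < ... < k < bar(k+1)}, and {bar1 < 1 < ... < bark < k} swapped is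
   {0 < bar1 < ... < k-1 < bark}; so the counting functions agree at every
   k > 0, hence so do the polynomials. *)

Definition compatible_step (Z : seq bool) (up : bool) (x y : nat) : bool :=
  (x < y) || (x == y) && (nth false Z x == up).

Definition admissible n (Z : seq bool) (pi : 'S_n) (a : 'I_n -> nat) : bool :=
  [forall i : 'I_n, forall j : 'I_n,
     (val j == (val i).+1) ==> compatible_step Z (pi i < pi j) (a i) (a j)].

Lemma eq_admissible n (Z : seq bool) (pi : 'S_n) (a b : 'I_n -> nat) :
  a =1 b -> admissible Z pi a = admissible Z pi b.
Proof. by move=> ab; apply: eq_forallb => i; apply: eq_forallb => j; rewrite !ab. Qed.

Lemma NcountE n (Z : seq bool) m (sizeZ : size Z = m) (pi : 'S_n) :
  Ncount Z pi = #|[set a : {ffun 'I_n -> 'I_m} | admissible Z pi (fun i => a i)]|.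
Proof.
case: m / sizeZ; apply: eq_card => a; rewrite !inE.
apply: eq_forallb => i; apply: eq_forallb => j; congr (_ ==> _).
by rewrite /compatible_step; case: ltngtP => // /val_inj ->; rewrite eqxx.
Qed.

Lemma compatible_step_negb (Z : seq bool) up x :
  x < size Z -> compatible_step (map negb Z) (~~ up) x =1 compatible_step Z up x.
Proof. by move=> ltxZ y; rewrite /compatible_step (nth_map false) // eqb_negLR negbK. Qed.

Lemma compatible_step_rev_negb (Z : seq bool) up x y :
  x < size Z -> y < size Z ->
  compatible_step (rev (map negb Z)) (~~ up) (size Z - y.+1) (size Z - x.+1)
  = compatible_step Z up x y.
Proof.
move=> ltxZ ltyZ; rewrite /compatible_step nth_rev size_map; last by lia.
have -> : size Z - (size Z - y.+1).+1 = y by lia.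
rewrite (nth_map false) // eqb_negLR negbK.
have -> : (size Z - y.+1 < size Z - x.+1) = (x < y) by lia.
have -> : (size Z - y.+1 == size Z - x.+1) = (x == y) by lia.
by case: eqVneq => // ->.
Qed.

Lemma ltn_rev_ord n (i j : 'I_n) : (rev_ord i < rev_ord j) = (j < i).
Proof. by rewrite /=; have := ltn_ord i; have := ltn_ord j; lia. Qed.

Lemma perm_ltnNlt n (pi : 'S_n) (i j : 'I_n) :
  i != j -> (pi j < pi i) = ~~ (pi i < pi j).
Proof.
rewrite -(inj_eq (@perm_inj _ pi)) => neq_ij.
by rewrite ltnNge leq_eqVlt val_eqE (negbTE neq_ij).
Qed.

Lemma comprE n (pi : 'S_n) i : compr pi i = rev_ord (pi i).
Proof. by rewrite permM permE. Qed.

Lemma complE n (pi : 'S_n) i : compl pi i = pi (rev_ord i).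
Proof. by rewrite permM permE. Qed.

Lemma forall_consecutive_rev n (F : 'I_n -> 'I_n -> bool) :
  [forall i, forall j, (val j == (val i).+1) ==> F (rev_ord j) (rev_ord i)] =
  [forall i, forall j, (val j == (val i).+1) ==> F i j].
Proof.
have rev_consecutive (i j : 'I_n) :
    val j = (val i).+1 -> val (rev_ord i) = (val (rev_ord j)).+1.
  by move=> /= ji; have := ltn_ord j; lia.
apply/forallP/forallP => F_ij i; apply/forallP => j;
  apply/implyP => /eqP/rev_consecutive/eqP rev_ji.
  rewrite -(rev_ordK i) -(rev_ordK j).
  exact: (implyP (forallP (F_ij _) _) rev_ji).
exact: (implyP (forallP (F_ij _) _) rev_ji).
Qed.

Lemma admissible_compr n (Z : seq bool) (pi : 'S_n) (a : 'I_n -> nat) :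
  (forall i, a i < size Z) -> admissible (map negb Z) (compr pi) a = admissible Z pi a.
Proof.
move=> lt_aZ; apply: eq_forallb => i; apply: eq_forallb => j; case: eqP => //= ji.
have neq_ij : i != j by rewrite -val_eqE /= ji ltn_eqF.
by rewrite !comprE ltn_rev_ord perm_ltnNlt // compatible_step_negb.
Qed.

Lemma admissible_compl n (Z : seq bool) (pi : 'S_n) (a : 'I_n -> nat) :
  (forall i, a i < size Z) ->
  admissible (rev (map negb Z)) (compl pi) (fun i => size Z - (a (rev_ord i)).+1)
  = admissible Z pi a.
Proof.
move=> lt_aZ; rewrite /admissible -forall_consecutive_rev.
apply: eq_forallb => i; apply: eq_forallb => j; case: eqP => //= ji.
have neq_ij : i != j by rewrite -val_eqE /= ji ltn_eqF.
by rewrite !complE !rev_ordK perm_ltnNlt // compatible_step_rev_negb.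
Qed.

Lemma Ncount_compr n (Z : seq bool) (pi : 'S_n) :
  Ncount (map negb Z) (compr pi) = Ncount Z pi.
Proof.
rewrite (NcountE (size_map negb Z)) (NcountE (erefl (size Z))).
by apply: eq_card => a; rewrite !inE admissible_compr.
Qed.

Lemma Ncount_compl n (Z : seq bool) (pi : 'S_n) :
  Ncount (rev (map negb Z)) (compl pi) = Ncount Z pi.
Proof.
rewrite (NcountE (etrans (size_rev _) (size_map negb Z))) (NcountE (erefl (size Z))).
pose flip (a : {ffun 'I_n -> 'I_(size Z)}) := [ffun i => rev_ord (a (rev_ord i))].
have flipK : involutive flip by move=> a; apply/ffunP => i; rewrite !ffunE !rev_ordK.
rewrite -(card_imset _ (inv_inj flipK)) (can2_imset_pre _ flipK flipK).
apply: eq_card => a; rewrite !inE -(@admissible_compl _ Z pi (fun i => a i)) //.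
by apply: eq_admissible => i; rewrite ffunE.
Qed.

Lemma pairsSr k : pairs k.+1 = pairs k ++ [:: false; true].
Proof. by elim: k => //= k <-. Qed.

Lemma rev_map_negb_pairs k : rev (map negb (pairs k)) = pairs k.
Proof. by elim: k => // k IH; rewrite {1}pairsSr map_cat rev_cat IH. Qed.

Lemma rev_map_negb_true_pairs k :
  rev (map negb (true :: pairs k)) = pairs k ++ [:: false].
Proof. by rewrite map_cons rev_cons rev_map_negb_pairs cats1. Qed.

Lemma map_negb_pairsS k : map negb (pairs k.+1) = true :: pairs k ++ [:: false].
Proof. by elim: k => [|k /= ->]. Qed.

Lemma poly_eq_pos (f g : nat -> nat) : (forall k, 0 < k -> f k = g k) -> poly_eq f g.
Proof.
move=> fg p q p_f q_g; apply/eqP; rewrite -subr_eq0; apply/eqP.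
apply: (@roots_geq_poly_eq0 _ _ [seq (i.+1%:R : rat)%R | i <- iota 0 (size (p - q)%R)]).
- by apply/allP => _ /mapP [i _ ->]; rewrite /root hornerD hornerN p_f // q_g // fg // subrr.
- by rewrite map_inj_uniq ?iota_uniq // => i j /eqP; rewrite eqr_nat => /eqP [].
- by rewrite size_map size_iota.
Qed.

Theorem proposition4p7 (n : nat) (pi : 'S_n) :
  poly_eq (Omega_l pi) (Omega_r (compl pi)) /\
  poly_eq (Omega' pi) (Omegabar' (compr pi)).
Proof.
split; apply: poly_eq_pos.
  by move=> k _; rewrite /Omega_r -rev_map_negb_true_pairs Ncount_compl.
by move=> [|k] // _; rewrite /Omegabar' -map_negb_pairsS Ncount_compr.
Qed.
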